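(* Let $(S,\mathrm{dist})$ be a finite metric space with $\operatorname{diam}(S)=1$, partitioned as $S=S_+\cup S_-$, with margin $\gamma=\min_{x\in S_+,y\in S_-}\mathrm{dist}(x,y)\in(0,1)$. Let $N_0\subset S$ be a $\gamma$-net of $S$. Run the following pruning procedure on a set $N$ initialized to $N_0$: for $i=0,-1,-2,\dots,\lceil\log_2\gamma\rceil$ (in this order), and for each point $p$ that is in the current set $N$ (processed one at a time), if the distance from $p$ to every point of $N$ with label opposite to that of $p$ is at least $2\cdot 2^i$ (vacuously true if there is no such point), then remove from $N$ every point $q\neq p$ with $\mathrm{dist}(p,q)<2^i-\gamma$. Then the final set $N$ is consistent with $S$.
   Context: A $\gamma$-net of $S$ is a subset $N_0\subset S$ whose distinct points are pairwise at distance $\ge\gamma$ and such that every point of $S$ is at distance strictly less than $\gamma$ from some point of $N_0$. A subset $S'\subset S$ is consistent with $S$ if for every $p\in S$, every nearest neighbor of $p$ in $S'$ belongs to the same class ($S_+$ or $S_-$) as $p$. *)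

From HB Require Import structures.
From mathcomp Require Import all_boot all_order all_algebra.
Set Implicit Arguments. Unset Strict Implicit. Unset Printing Implicit Defensive.
Import Order.TTheory GRing.Theory Num.Theory.
Local Open Scope ring_scope.

Section Defs.
Variables (R : realFieldType) (T : finType) (dist : T -> T -> R).

Definition is_metric : Prop :=
  [/\ forall x y, 0 <= dist x y,
      forall x y, dist x y = 0 <-> x = y,
      forall x y, dist x y = dist y x &
      forall x y z, dist x z <= dist x y + dist y z].

Definition diam_one : Prop :=
  (forall x y, dist x y <= 1) /\ exists x y, dist x y = 1.

Variable lab : T -> bool. (* true = S_+, false = S_- *)

Definition is_margin (gamma : R) : Prop :=
  (forall x y, lab x -> ~~ lab y -> gamma <= dist x y) /\
  exists x y, [/\ lab x, ~~ lab y & dist x y = gamma].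

Definition is_net (gamma : R) (N0 : {set T}) : Prop :=
  (forall p q, p \in N0 -> q \in N0 -> p != q -> gamma <= dist p q) /\
  (forall x, exists2 p, p \in N0 & dist x p < gamma).

Definition consistent (N : {set T}) : Prop :=
  forall p q, q \in N -> (forall q', q' \in N -> dist p q <= dist p q') ->
    lab q = lab p.

Definition prune_step (gamma r : R) (N : {set T}) (p : T) : {set T} :=
  if (p \in N) && [forall q in N, (lab q != lab p) ==> (2 * r <= dist p q)]
  then [set q in N | (q == p) || ~~ (dist p q < r - gamma)]
  else N.

Definition prune_round (gamma r : R) (N : {set T}) (s : seq T) : {set T} :=
  foldl (prune_step gamma r) N s.

(* rounds for i = 0, -1, ..., -K (scale 2^i = (2^k)^-1 with k = -i),
   the round for k using the processing order ord k *)
Definition prune (gamma : R) (ord : nat -> seq T) (K : nat) (N0 : {set T}) :=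
  foldl (fun N k => prune_round gamma ((2 ^+ k)^-1) N (ord k)) N0 (iota 0 K.+1).

End Defs.

(* The pruning keeps, for every point x, a witness p of x's label that is either
   gamma-close to x, or lies within some scale s of x while being 2s-separated
   from the opposite class and (s - gamma)-separated from the rest of N.  A
   point of the second kind passes the test at every later (smaller) scale and
   is never removed again; a gamma-close witness can only be removed by a point
   c of the same label, which then becomes a witness of the second kind at the
   current scale.  Finally a nearest neighbour q of x of the wrong label would
   satisfy dist x q <= dist x p, which contradicts the margin in the first case
   and the 2s-separation (via dist p q <= dist p x + dist x q < 2s) in the
   second.  Only the monotonicity of the scales matters: the diameter, the
   value of K and the processing orders play no role. *)
From HB Require Import structures.
From mathcomp Require Import all_boot all_order all_algebra.
From mathcomp Require Import lra.
Set Implicit Arguments. Unset Strict Implicit. Unset Printing Implicit Defensive.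
Import Order.TTheory GRing.Theory Num.Theory.
Local Open Scope ring_scope.

Section Pruning.
Variables (R : realFieldType) (T : finType) (dist : T -> T -> R) (lab : T -> bool)
  (gamma : R).
Hypothesis dist_ge0 : forall x y, 0 <= dist x y.
Hypothesis distC : forall x y, dist x y = dist y x.
Hypothesis dist_triangle : forall x y z, dist x z <= dist x y + dist y z.
Hypothesis gamma_gt0 : 0 < gamma.

Definition isolated_at (N : {set T}) (s : R) (p : T) : Prop :=
  (forall q, q \in N -> lab q != lab p -> 2 * s <= dist p q) /\
  (forall q, q \in N -> q != p -> s - gamma <= dist p q).

Definition guarded (N : {set T}) (r : R) (x : T) : Prop :=
  exists2 p, p \in N /\ lab p = lab x &
    dist x p < gamma \/ exists2 s, r <= s & dist x p < s /\ isolated_at N s p.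

Lemma isolated_atS (N N' : {set T}) s p :
  N' \subset N -> isolated_at N s p -> isolated_at N' s p.
Proof.
move=> /subsetP sub [opp other]; split=> q /sub qN; [exact: opp | exact: other].
Qed.

Lemma guarded_le (N : {set T}) r r' x : r' <= r -> guarded N r x -> guarded N r' x.
Proof.
move=> le_r [p pN [near | [s le_rs isol]]]; exists p => //; first by left.
by right; exists s => //; apply: le_trans le_rs.
Qed.

Section Step.
Variables (r : R) (N : {set T}) (c : T).
Hypothesis cN : c \in N.
Hypothesis c_sep :
  forall q, q \in N -> lab q != lab c -> 2 * r <= dist c q.

Let N' := [set q in N | (q == c) || ~~ (dist c q < r - gamma)].

Lemma isolated_at_pruner : isolated_at N' r c.
Proof.
split=> q; rewrite inE => /andP[qN kept]; first exact: c_sep.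
by move=> /negbTE qNc; move: kept; rewrite qNc /= -leNgt.
Qed.

Lemma guarded_pruned x : guarded N r x -> guarded N' r x.
Proof.
have sub : N' \subset N by apply/subsetP => q; rewrite inE => /andP[].
move=> [p [pN lab_p] wit].
case kept : ((p == c) || ~~ (dist c p < r - gamma)).
  exists p; first by rewrite inE pN kept.
  case: wit => [near | [s le_rs [dxp isol]]]; first by left.
  by right; exists s => //; split => //; apply: isolated_atS isol.
move/negbT: kept; rewrite negb_or negbK => /andP[pNc dcp].
case: wit => [near | [s le_rs [_ [_ other]]]]; last first.
  by have := other _ cN; rewrite eq_sym pNc distC => /(_ isT); lra.
have lab_c : lab c = lab p.
  apply/eqP/negPn/negP => ne.
  have := c_sep pN; rewrite eq_sym => /(_ ne).
  by have := gamma_gt0; have := dist_ge0 c p; lra.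
exists c; first by rewrite inE cN eqxx lab_c.
right; exists r => //; split; last exact: isolated_at_pruner.
by have := dist_triangle x p c; rewrite (distC p c); lra.
Qed.

End Step.

Lemma guarded_prune_step r (N : {set T}) c x :
  guarded N r x -> guarded (prune_step dist lab gamma r N c) r x.
Proof.
rewrite /prune_step; case: ifP => // /andP[cN /forallP c_sep].
apply: guarded_pruned => // q qN ne.
by have := c_sep q; rewrite qN ne.
Qed.

Lemma guarded_prune_round r (N : {set T}) s x :
  guarded N r x -> guarded (prune_round dist lab gamma r N s) r x.
Proof.
rewrite /prune_round; elim: s N => [|c s IH] N //= g.
exact/IH/guarded_prune_step.
Qed.

Lemma le_inv_exp2S (m : nat) : ((2 : R) ^+ m.+1)^-1 <= (2 ^+ m)^-1.
Proof.
have pos : (0 : R) < 2 ^+ m by apply: exprn_gt0.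
by rewrite lef_pV2 ?posrE ?exprn_gt0 // exprS; lra.
Qed.

Lemma guarded_prune_rounds (ord : nat -> seq T) m n (N : {set T}) x :
  guarded N (2 ^+ m)^-1 x ->
  guarded (foldl (fun N k => prune_round dist lab gamma (2 ^+ k)^-1 N (ord k))
             N (iota m n)) (2 ^+ (m + n))^-1 x.
Proof.
elim: n m N => [|n IH] m N g /=; first by rewrite addn0.
rewrite -addSnnS; apply: IH.
exact/(guarded_le (le_inv_exp2S m))/guarded_prune_round.
Qed.

Hypothesis margin : forall x y, lab x != lab y -> gamma <= dist x y.

Lemma guarded_net (N0 : {set T}) r x :
  (forall x, exists2 p, p \in N0 & dist x p < gamma) -> guarded N0 r x.
Proof.
move=> /(_ x) [p pN0 near]; exists p; last by left.
split=> //; apply/eqP/negPn/negP => /margin.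
by rewrite distC; lra.
Qed.

Lemma consistent_guarded (N : {set T}) r :
  (forall x, guarded N r x) -> consistent dist lab N.
Proof.
move=> g x q qN nearest; apply/eqP/negPn/negP => ne.
have [p [pN lab_p] wit] := g x.
have dxq := nearest p pN.
case: wit => [near | [s _ [dxp [opp _]]]].
  by have := margin ne; rewrite distC; lra.
have := opp q qN; rewrite lab_p => /(_ ne).
by have := dist_triangle p x q; rewrite (distC p x); lra.
Qed.

End Pruning.

Lemma margin_le (R : realFieldType) (T : finType) (dist : T -> T -> R)
    (lab : T -> bool) (gamma : R) :
  (forall x y, dist x y = dist y x) -> is_margin dist lab gamma ->
  forall x y, lab x != lab y -> gamma <= dist x y.
Proof.
move=> distC [margin _] x y; case lx: (lab x); case ly: (lab y) => //= _.
  by apply: margin; rewrite ?lx ?ly.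
by rewrite distC; apply: margin; rewrite ?lx ?ly.
Qed.

Theorem lemma1 (R : realFieldType) (T : finType) (dist : T -> T -> R)
  (lab : T -> bool) (gamma : R) (N0 : {set T}) (K : nat)
  (ord : nat -> seq T) :
  is_metric dist -> diam_one dist ->
  is_margin dist lab gamma -> 0 < gamma -> gamma < 1 ->
  is_net dist gamma N0 ->
  (* K = - ceil(log2 gamma), i.e. 2^(-K-1) < gamma <= 2^(-K) *)
  gamma <= (2 ^+ K)^-1 -> (2 ^+ K.+1)^-1 < gamma ->
  (* each round processes the points in an arbitrary order *)
  (forall k, perm_eq (ord k) (enum T)) ->
  consistent dist lab (prune dist lab gamma ord K N0).
Proof.
move=> [dist_ge0 _ distC dist_triangle] _ /(margin_le distC) margin gamma_gt0 _
  [_ cover] _ _ _.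
apply: (consistent_guarded distC dist_triangle margin) => x.
apply: (guarded_prune_rounds dist_ge0 distC dist_triangle gamma_gt0 ord K.+1).
exact: (guarded_net distC margin _ x cover).
Qed.
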